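(* For unit activation costs, in every game under the coordination mechanism described in the context, for every optimal assignment $s^*$ there exists a payment vector $\xi$ such that $(s^*,\xi)$ is a Nash equilibrium.
   Context: Unit activation costs means $c(0)=0$ and $c(l)=1$ for every integer $l>0$. A game consists of the cost function $c$, slots $t=1,\dots,T$, and a set of jobs, each job $j$ having integer release time $r_j$ and deadline $d_j$ with $0<r_j<d_j<T$. An assignment $s$ gives each job a slot $s_j$ with $r_j\le s_j<d_j$; the load is $l_t(s)=|\{j:s_j=t\}|$ and $C(s)=\sum_{t=1}^T c(l_t(s))$; an optimal assignment minimizes $C$. In the coordination mechanism, each job $j$ chooses a pair $(s_j,\xi_j)$ with $s_j\in[r_j,d_j)$ and payment $\xi_j\ge0$. Slot $t$ is opened iff $\sum_{j:s_j=t}\xi_j\ge c(l_t(s))$; a job whose slot is not opened has infinite cost, otherwise its cost is $\xi_j$. A profile $(s,\xi)$ is a Nash equilibrium if for every job $j$: (i) $\sum_{j':s_{j'}=s_j}\xi_{j'}\ge c(l_{s_j}(s))$; (ii) for every $t\in[r_j,d_j)\setminus\{s_j\}$, $\xi_j\le\max\{0,\,c(l_t(s)+1)-\sum_{j':s_{j'}=t}\xi_{j'}\}$; (iii) $\xi_j\le\max\{0,\,c(l_{s_j}(s))-\sum_{j':s_{j'}=s_j,\,j'\ne j}\xi_{j'}\}$. *)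

From mathcomp Require Import all_boot all_order all_algebra.
Set Implicit Arguments. Unset Strict Implicit. Unset Printing Implicit Defensive.
Import Order.TTheory GRing.Theory Num.Theory.
Local Open Scope ring_scope.

Definition unit_cost (R : realFieldType) (l : nat) : R :=
  if l == 0%N then 0 else 1.

Section Game.
Variables (R : realFieldType) (c : nat -> R) (n : nat).
(* jobs are 'I_n ; r j, d j : release times and deadlines; T : number of slots *)
Variables (T : nat) (r d : 'I_n -> nat).

Definition feasible (s : 'I_n -> nat) : Prop :=
  forall j, (r j <= s j < d j)%N.

Definition load (s : 'I_n -> nat) (t : nat) : nat := #|[set j | s j == t]|.

Definition total_cost (s : 'I_n -> nat) : R :=
  \sum_(1 <= t < T.+1) c (load s t).

Definition optimal (s : 'I_n -> nat) : Prop :=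
  feasible s /\ forall s', feasible s' -> total_cost s <= total_cost s'.

Definition pay_at (s : 'I_n -> nat) (xi : 'I_n -> R) (t : nat) : R :=
  \sum_(j' | s j' == t) xi j'.

Definition nash (s : 'I_n -> nat) (xi : 'I_n -> R) : Prop :=
  feasible s /\ (forall j, 0 <= xi j) /\
  forall j,
    [/\ pay_at s xi (s j) >= c (load s (s j)),
        (forall t, (r j <= t < d j)%N -> t != s j ->
           xi j <= Num.max 0 (c (load s t).+1 - pay_at s xi t))
      & xi j <= Num.max 0 (c (load s (s j)) -
                           \sum_(j' | (s j' == s j) && (j' != j)) xi j')].
End Game.

(* For unit costs, C(s) counts the open slots of s.  In an optimal assignment
   every open slot t holds a job whose other admissible slots are all closed:
   otherwise each job of t could move to an already open slot, closing t and
   lowering the cost.  Let one such job of each open slot pay 1 and every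
   other job pay 0.  Each open slot is then paid for exactly; the payer cannot
   deviate profitably, since any other admissible slot is empty and would
   cost it c(1) = 1; and no other job pays anything. *)
From mathcomp Require Import all_boot all_order all_algebra.
Set Implicit Arguments. Unset Strict Implicit. Unset Printing Implicit Defensive.
Import Order.TTheory GRing.Theory Num.Theory.
Local Open Scope ring_scope.

Lemma load_gt0P n (s : 'I_n -> nat) t :
  reflect (exists j, s j = t) (0 < load s t)%N.
Proof.
rewrite /load card_gt0; apply: (iffP (set0Pn _)) => [[j]|[j <-]].
  by rewrite inE => /eqP; exists j.
by exists j; rewrite inE.
Qed.

Lemma unit_costE (R : realFieldType) m : unit_cost R m = (0 < m)%N%:R.
Proof. by rewrite /unit_cost lt0n; case: eqP. Qed.

Lemma ltr_sum_seq_at (R : numDomainType) (I : eqType) (rs : seq I)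
    (F G : I -> R) i0 :
  uniq rs -> i0 \in rs -> (forall i, i \in rs -> F i <= G i) ->
  F i0 < G i0 -> \sum_(i <- rs) F i < \sum_(i <- rs) G i.
Proof.
move=> rs_uniq rs_i0 leFG ltFG0.
rewrite !(bigD1_seq i0) //=; apply: ltr_leD => //.
rewrite big_seq_cond [leRHS]big_seq_cond.
by apply: ler_sum => i /andP[/leFG].
Qed.

Lemma total_unit_cost_lt (R : realFieldType) n T (s s' : 'I_n -> nat) t0 :
  (forall t, 0 < load s' t -> 0 < load s t)%N ->
  (0 < t0 <= T)%N -> (0 < load s t0)%N -> load s' t0 = 0%N ->
  total_cost (unit_cost R) T s' < total_cost (unit_cost R) T s.
Proof.
move=> open_s' t0_range open_t0 closed_t0.
apply: (@ltr_sum_seq_at _ _ _ _ _ t0); rewrite ?iota_uniq ?mem_index_iota //.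
  move=> t _; rewrite !unit_costE ler_nat.
  by case: (ltnP 0 (load s' t)) => // /open_s' ->.
by rewrite !unit_costE closed_t0 open_t0 ltr01.
Qed.

Section PinnedJobs.
Variables (R : realFieldType) (n T : nat) (r d s : 'I_n -> nat).

Definition pinned j := [forall t : 'I_(d j),
  ((r j <= t)%N && (val t != s j)) ==> (load s t == 0)%N].

Lemma pinnedP j : reflect
  (forall t, (r j <= t < d j)%N -> t != s j -> load s t = 0%N) (pinned j).
Proof.
apply: (iffP forallP) => [pin t /andP[rt td] ts|pin t].
  by apply/eqP/(implyP (pin (Ordinal td))); rewrite rt ts.
by apply/implyP => /andP[rt ts]; rewrite pin ?rt ?ltn_ord.
Qed.

Definition detour k : nat :=
  if [pick t : 'I_(d k) | [&& r k <= t, val t != s k & 0 < load s t]%N]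
  is Some t then val t else s k.

Lemma detour_open k : (0 < load s (detour k))%N.
Proof.
rewrite /detour; case: pickP => [t /and3P[] //|_].
by apply/load_gt0P; exists k.
Qed.

Lemma detour_feasible k : (r k <= s k < d k)%N -> (r k <= detour k < d k)%N.
Proof.
by move=> fk; rewrite /detour; case: pickP => // t /and3P[-> _ _] /=.
Qed.

Lemma detour_moves k : ~~ pinned k -> detour k != s k.
Proof.
move=> /forallPn[t]; rewrite negb_imply => /andP[/andP[rt ts] open_t].
rewrite /detour; case: pickP => [t' /and3P[] //|/(_ t)].
by rewrite rt ts lt0n open_t.
Qed.

Lemma optimal_has_pinned :
  (forall j, 0 < r j)%N -> (forall j, d j < T)%N ->
  optimal (unit_cost R) T r d s ->
  forall j, exists2 j', s j' = s j & pinned j'.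
Proof.
move=> r_gt0 d_ltT [s_feas s_opt] j.
case: (pickP [pred j' | (s j' == s j) && pinned j']).
  by move=> j' /andP[/eqP sj' pin]; exists j'.
move=> no_pinned; pose s' k := if s k == s j then detour k else s k.
have s'_feas : feasible r d s'.
  move=> k; rewrite /s'; case: ifP => _; last exact: s_feas.
  exact/detour_feasible/s_feas.
have s'_open t : (0 < load s' t -> 0 < load s t)%N.
  case/load_gt0P => k <-; rewrite /s'; case: ifP => _; first exact: detour_open.
  by apply/load_gt0P; exists k.
have s'_closed : load s' (s j) = 0%N.
  apply/eqP; rewrite -leqn0 leqNgt; apply/load_gt0P => -[k].
  rewrite /s'; case: ifP => [/eqP sk|/eqP //].
  have : ~~ pinned k by move: (no_pinned k); rewrite /= sk eqxx => /negbT.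
  by move/detour_moves; rewrite sk => /eqP.
have /andP[rs sd] := s_feas j.
have := s_opt _ s'_feas; rewrite leNgt => /negP[].
apply: (@total_unit_cost_lt R n T s s' (s j)) => //.
  by rewrite (leq_trans (r_gt0 j) rs) (ltnW (ltn_trans sd (d_ltT j))).
by apply/load_gt0P; exists j.
Qed.

Definition payer t : option 'I_n := [pick j | (s j == t) && pinned j].

Definition payment j : R := (payer (s j) == Some j)%:R.

Lemma payerP t j : payer t = Some j -> s j = t /\ pinned j.
Proof. by rewrite /payer; case: pickP => // j' /andP[/eqP <- pin] [<-]. Qed.

Lemma pay_at_payment t : pay_at s payment t = (payer t != None)%:R.
Proof.
rewrite /pay_at (eq_bigr (fun j => (payer t == Some j)%:R)); last first.
  by move=> j /eqP sj; rewrite /payment sj.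
case def_p: (payer t) => [j|]; last by rewrite big1.
have [sj _] := payerP def_p.
rewrite (bigD1 j) ?sj //= eqxx big1 ?addr0 // => k /andP[_ kj].
by rewrite (inj_eq Some_inj) eq_sym (negbTE kj).
Qed.

Lemma pay_at_closed t : load s t = 0%N -> pay_at s payment t = 0.
Proof.
move=> closed_t; rewrite pay_at_payment; case def_p: (payer t) => [j|] //.
have [sj _] := payerP def_p.
suff /load_gt0P : exists k, s k = t by rewrite closed_t.
by exists j.
Qed.

Lemma payment_others j : payer (s j) = Some j ->
  \sum_(j' | (s j' == s j) && (j' != j)) payment j' = 0.
Proof.
move=> pj; rewrite big1 // => k /andP[/eqP sk kj].
by rewrite /payment sk pj (inj_eq Some_inj) eq_sym (negbTE kj).
Qed.

Lemma optimal_payer_open : (forall j, 0 < r j)%N -> (forall j, d j < T)%N ->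
  optimal (unit_cost R) T r d s -> forall j, payer (s j) != None.
Proof.
move=> r_gt0 d_ltT s_opt j.
have [j' sj' pin] := optimal_has_pinned r_gt0 d_ltT s_opt j.
by rewrite /payer; case: pickP => // /(_ j'); rewrite sj' eqxx pin.
Qed.
End PinnedJobs.

Theorem theorem4 (R : realFieldType) (n T : nat) (r d : 'I_n -> nat)
  (hr : forall j, (0 < r j)%N) (hrd : forall j, (r j < d j)%N)
  (hdT : forall j, (d j < T)%N)
  (sstar : 'I_n -> nat) :
  optimal (@unit_cost R) T r d sstar ->
  exists xi : 'I_n -> R, nash (@unit_cost R) r d sstar xi.
Proof.
move=> s_opt; exists (payment R r d sstar); split; first by case: s_opt.
split=> [j|j]; first by rewrite ler0n.
have open_j : (0 < load sstar (sstar j))%N by apply/load_gt0P; exists j.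
have paid : pay_at sstar (payment R r d sstar) (sstar j) = 1.
  by rewrite pay_at_payment (optimal_payer_open hr hdT s_opt).
rewrite paid unit_costE open_j /payment; split=> // [t jt tj|].
  case: eqP => [/payerP[_ /pinnedP pin]|_]; last by rewrite le_max lexx.
  by rewrite pin // pay_at_closed ?pin // subr0 le_max lexx orbT.
case: eqP => [pj|_]; last by rewrite le_max lexx.
by rewrite payment_others // subr0 le_max lexx orbT.
Qed.
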